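(* Let $L$ be a multisorted algebra in the positive quantifier-free signature. Then $L$ satisfies axioms (0), (1), (2), (3), (4) if and only if $L$ is isomorphic to a subalgebra of the positive quantifier-free algebra $A(W)$ of some set $W$.
   Context: Throughout, the Boolean prime ideal theorem is assumed. Signature. There is a sort $n$ for each natural number $n\ge 0$. For every function $\alpha\colon\{1,\dots,n\}\to\{1,\dots,k\}$ there is a unary function symbol (''substitution'') $\alpha\colon n\to k$ (argument of sort $n$, value of sort $k$). For each sort $n$ there are constants $0^n,1^n$ of sort $n$ and binary operations $\vee^n,\wedge^n$ on sort $n$ (superscripts usually omitted). This is the positive quantifier-free signature. If $\alpha\colon k\to n$ and $\beta\colon n\to m$ are substitutions, $\beta\circ\alpha\colon k\to m$ denotes the substitution symbol of the composite function $\{1,\dots,k\}\to\{1,\dots,m\}$, while $\beta(\alpha(r))$ denotes composition of the operations inside an algebra. $\mathrm{id}\colon n\to n$ is the identity substitution. Concrete algebras. For a set $W$ and a substitution $\alpha\colon\{1,\dots,n\}\to\{1,\dots,k\}$ put $\alpha^{\mathrm{tuple}}\colon W^k\to W^n$, $\alpha^{\mathrm{tuple}}(x_1,\dots,x_k)=(x_{\alpha(1)},\dots,x_{\alpha(n)})$, and $\alpha^{\mathrm{relation}}\colon\mathcal P(W^n)\to\mathcal P(W^k)$, $\alpha^{\mathrm{relation}}(r)=\{\bar x\in W^k:\alpha^{\mathrm{tuple}}(\bar x)\in r\}$. The positive quantifier-free algebra $A(W)$ has sort $n$ interpreted as $\mathcal P(W^n)$, each substitution $\alpha$ interpreted as $\alpha^{\mathrm{relation}}$,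 and $0,1,\vee,\wedge$ on sort $n$ interpreted as $\emptyset, W^n,\cup,\cap$. (Note $W^0$ has exactly one element, so sort $0$ of $A(W)$ has two elements.) Subalgebras and morphisms are in the multisorted sense. Partitioning cylindrifications: given $k_1,\dots,k_m\ge 0$ and $n=k_1+\dots+k_m$, the substitutions $c_i\colon k_i\to n$ given by $c_i(l)=l+\sum_{j<i}k_j$ (so $c_i^{\mathrm{tuple}}(\bar x_1\cdots\bar x_m)=\bar x_i$). In an algebra, $x\le y$ (also written $y\ge x$) means $x=x\wedge y$. Axioms: (0) For all partitioning cylindrifications $c_1,\dots,c_m$ with $c_i\colon k_i\to k_1+\dots+k_m$, and all $r_i,s_i$ of sort $k_i$: if $\bigvee_{i=1}^m c_i(s_i)\ge\bigwedge_{i=1}^m c_i(r_i)$ then $s_i\ge r_i$ for some $i$. This includes the case $m=0$ (empty join $=0$, empty meet $=1$ in sort $0$, empty disjunction false), i.e. $0\ge 1$ fails in sort $0$. (1) In each sort, $0,1,\vee,\wedge$ form a bounded distributive lattice. (2) Every substitution preserves $0,1,\vee,\wedge$ (e.g. $\alpha(r\wedge s)=\alpha(r)\wedge\alpha(s)$). (3) For substitutions $\alpha\colon k\to n$, $\beta\colon n\to m$ and all $r$ of sort $k$: $(\beta\circ\alpha)(r)=\beta(\alpha(r))$. (4) For all $r$ of sort $n$: $\mathrm{id}(r)=r$. *)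

From mathcomp Require Import all_boot.
Set Implicit Arguments. Unset Strict Implicit. Unset Printing Implicit Defensive.

(* Sort n indexed by n : nat; a substitution alpha : {1..n} -> {1..k} is
   represented (0-indexed) by a finite function alpha : {ffun 'I_n -> 'I_k}. *)
Record pqf_alg := PqfAlg {
  car  : nat -> Type;
  sub  : forall n k : nat, {ffun 'I_n -> 'I_k} -> car n -> car k;
  zero : forall n, car n;
  one  : forall n, car n;
  join : forall n, car n -> car n -> car n;
  meet : forall n, car n -> car n -> car n
}.
Arguments sub L {n k} a x : rename.
Arguments zero L {n} : rename.
Arguments one L {n} : rename.
Arguments join L {n} x y : rename.
Arguments meet L {n} x y : rename.

Definition le (L : pqf_alg) n (x y : car L n) : Prop := x = meet L x y.

Definition comp_sub n k m (b : {ffun 'I_k -> 'I_m}) (a : {ffun 'I_n -> 'I_k})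
  : {ffun 'I_n -> 'I_m} := [ffun i => b (a i)].
Definition id_sub n : {ffun 'I_n -> 'I_n} := [ffun i => i].

Definition offset m (ks : 'I_m -> nat) (i : 'I_m) : nat :=
  \sum_(j < m | j < i) ks j.

Lemma cyl_bound m (ks : 'I_m -> nat) (i : 'I_m) (l : 'I_(ks i)) :
  l + offset ks i < \sum_(j < m) ks j.
Proof.
rewrite /offset [X in _ < X](bigD1 i) //=.
have H : \sum_(j < m | j < i) ks j <= \sum_(j < m | j != i) ks j.
  rewrite [X in X <= _]big_mkcond [X in _ <= X]big_mkcond /=.
  apply: leq_sum => j _; case: (ltnP j i) => [ji|//].
  by rewrite (_ : j != i) //; apply/eqP => E; rewrite E ltnn in ji.
rewrite -addSn; apply: leq_add; [exact: ltn_ord | exact: H].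
Qed.

Definition cyl m (ks : 'I_m -> nat) (i : 'I_m)
  : {ffun 'I_(ks i) -> 'I_(\sum_(j < m) ks j)} :=
  [ffun l => Ordinal (cyl_bound l)].

Definition axiom0 (L : pqf_alg) : Prop :=
  forall m (ks : 'I_m -> nat) (r s : forall i : 'I_m, car L (ks i)),
    le (\big[@meet L _/one L]_(i < m) sub L (cyl ks i) (r i))
       (\big[@join L _/zero L]_(i < m) sub L (cyl ks i) (s i)) ->
    exists i : 'I_m, le (r i) (s i).

Definition axiom1 (L : pqf_alg) : Prop :=
  forall n (x y z : car L n),
    join L x (join L y z) = join L (join L x y) z /\
    meet L x (meet L y z) = meet L (meet L x y) z /\
    join L x y = join L y x /\
    meet L x y = meet L y x /\
    join L x (meet L x y) = x /\
    meet L x (join L x y) = x /\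
    meet L x (join L y z) = join L (meet L x y) (meet L x z) /\
    join L x (zero L) = x /\
    meet L x (one L) = x.

Definition axiom2 (L : pqf_alg) : Prop :=
  forall n k (a : {ffun 'I_n -> 'I_k}) (x y : car L n),
    [/\ sub L a (zero L) = zero L,
        sub L a (one L) = one L,
        sub L a (join L x y) = join L (sub L a x) (sub L a y)
      & sub L a (meet L x y) = meet L (sub L a x) (sub L a y)].

Definition axiom3 (L : pqf_alg) : Prop :=
  forall k n m (a : {ffun 'I_k -> 'I_n}) (b : {ffun 'I_n -> 'I_m}) (r : car L k),
    sub L (comp_sub b a) r = sub L b (sub L a r).

Definition axiom4 (L : pqf_alg) : Prop :=
  forall n (r : car L n), sub L (id_sub n) r = r.

Definition pqf_axioms (L : pqf_alg) : Prop :=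
  [/\ axiom0 L, axiom1 L, axiom2 L, axiom3 L & axiom4 L].

(* The concrete algebra A(W): sort n is P(W^n), with W^n = 'I_n -> W and
   subsets represented as predicates. *)
Definition A (W : Type) : pqf_alg := {|
  car  := fun n => ('I_n -> W) -> Prop;
  sub  := fun n k a r => fun x : 'I_k -> W => r (fun i => x (a i));
  zero := fun n => fun _ => False;
  one  := fun n => fun _ => True;
  join := fun n r s => fun x => r x \/ s x;
  meet := fun n r s => fun x => r x /\ s x
|}.

Record subalg (L : pqf_alg) := Subalg {
  smem : forall n, car L n -> Prop;
  smem_sub : forall n k (a : {ffun 'I_n -> 'I_k}) x, smem x -> smem (sub L a x);
  smem_zero : forall n, smem (zero L (n:=n));
  smem_one : forall n, smem (one L (n:=n));
  smem_join : forall n (x y : car L n), smem x -> smem y -> smem (join L x y);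
  smem_meet : forall n (x y : car L n), smem x -> smem y -> smem (meet L x y)
}.
Arguments smem {L} S {n} x : rename.

Definition subalg_alg (L : pqf_alg) (S : subalg L) : pqf_alg := {|
  car  := fun n => {x : car L n | smem S x};
  sub  := fun n k a x => exist _ (sub L a (proj1_sig x)) (smem_sub a (proj2_sig x));
  zero := fun n => exist _ (zero L) (smem_zero S n);
  one  := fun n => exist _ (one L) (smem_one S n);
  join := fun n x y => exist _ (join L (proj1_sig x) (proj1_sig y))
                              (smem_join (proj2_sig x) (proj2_sig y));
  meet := fun n x y => exist _ (meet L (proj1_sig x) (proj1_sig y))
                              (smem_meet (proj2_sig x) (proj2_sig y))
|}.

Definition is_hom (L M : pqf_alg) (f : forall n, car L n -> car M n) : Prop :=
  [/\ forall n k (a : {ffun 'I_n -> 'I_k}) x, f k (sub L a x) = sub M a (f n x),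
      forall n, f n (zero L) = zero M,
      forall n, f n (one L) = one M,
      forall n x y, f n (join L x y) = join M (f n x) (f n y)
    & forall n x y, f n (meet L x y) = meet M (f n x) (f n y)].

Definition isomorphic (L M : pqf_alg) : Prop :=
  exists f : forall n, car L n -> car M n,
    is_hom f /\ forall n, bijective (f n).

From Pilot Require Import Defs.
From mathcomp Require Import all_boot.
From mathcomp Require Import boolp classical_sets.

Set Implicit Arguments. Unset Strict Implicit. Unset Printing Implicit Defensive.

(* For completeness, let W consist
   of one variable for each argument place of each pair r, s with r </= s (a
   "gap").  An embedding of L into A(W) amounts to a choice, for every tuple x
   of variables, of a prime filter "x satisfies r" on the sort of x, compatible
   with substitutions; it must realize every gap, i.e. satisfy r and not s at
   the gap's own tuple of variables.  Axiom (0) realizes finitely many gaps at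
   once: a prime filter on the sort of the concatenated arities containing the
   meet of the cylindrified r's and avoiding the join of the cylindrified s's
   does it.  The prime filter theorem, applied to formulas ordered by
   entailment over all such models, then realizes all gaps simultaneously. *)

Section PrimeFilter.
Variables (D : Type) (leD : D -> D -> Prop) (inf sup : D -> D -> D).
Hypothesis leD_trans : forall a b c, leD a b -> leD b c -> leD a c.
Hypothesis infl : forall a b, leD (inf a b) a.
Hypothesis infr : forall a b, leD (inf a b) b.
Hypothesis le_inf : forall a b c, leD c a -> leD c b -> leD c (inf a b).
Hypothesis supl : forall a b, leD a (sup a b).
Hypothesis supr : forall a b, leD b (sup a b).
Hypothesis sup_le : forall a b c, leD a c -> leD b c -> leD (sup a b) c.
Hypothesis inf_sup : forall a b c, leD (inf a (sup b c)) (sup (inf a b) (inf a c)).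

Local Open Scope classical_set_scope.

Definition is_filter (P : set D) :=
  (forall a b, P a -> leD a b -> P b) /\ (forall a b, P a -> P b -> P (inf a b)).
Definition is_ideal (P : set D) :=
  (forall a b, P b -> leD a b -> P a) /\ (forall a b, P a -> P b -> P (sup a b)).
Definition is_prime (P : set D) := forall a b, P (sup a b) -> P a \/ P b.

Variables (F I : set D).
Hypotheses (filterF : is_filter F) (idealI : is_ideal I) (FI : forall a, F a -> ~ I a).

(* [X] is recorded through [F `|` X] so that the empty chain of Zorn's lemma is admissible. *)
Definition avoiding_extension (X : set D) :=
  is_filter (F `|` X) /\ forall a, (F `|` X) a -> ~ I a.

Lemma avoiding_extension_bigcup (C : set (set D)) :
  C `<=` avoiding_extension -> total_on C subset ->
  avoiding_extension (\bigcup_(X in C) X).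
Proof.
move=> CP Ctot; have [Fup Finf] := filterF.
have inC a : (F `|` \bigcup_(X in C) X) a -> F a \/ exists2 X, C X & X a.
  by case=> [Fa|[X CX Xa]]; [left|right; exists X].
have inX X a : C X -> (F `|` X) a -> (F `|` \bigcup_(X in C) X) a.
  by move=> CX [Fa|Xa]; [left|right; exists X].
split; first split.
- move=> a b /inC[Fa|[X CX Xa]] ab; first by left; exact: Fup ab.
  by apply: (inX X) => //; have [[Xup _] _] := CP X CX; exact: Xup (or_intror Xa) ab.
- move=> a b /inC[Fa|[X CX Xa]] /inC[Fb|[Y CY Yb]]; first by left; exact: Finf.
  + by apply: (inX Y) => //; have [[_ Yinf] _] := CP Y CY; apply: Yinf; [left|right].
  + by apply: (inX X) => //; have [[_ Xinf] _] := CP X CX; apply: Xinf; [right|left].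
  + have [XY|YX] := Ctot X Y CX CY.
    * apply: (inX Y) => //; have [[_ Yinf] _] := CP Y CY.
      by apply: Yinf; right => //; exact: XY.
    * apply: (inX X) => //; have [[_ Xinf] _] := CP X CX.
      by apply: Xinf; right => //; exact: YX.
- move=> a /inC[Fa|[X CX Xa]]; first exact: FI.
  by have [_ XI] := CP X CX; exact: XI (or_intror Xa).
Qed.

Section Maximal.
Variable A : set D.
Hypotheses (extA : avoiding_extension A)
  (maxA : forall B, A `<` B -> ~ avoiding_extension B).

(* By maximality, the filter generated by [F `|` A] and [a] meets [I]. *)
Lemma maximal_extension_escape a c : (F `|` A) c -> ~ (F `|` A) a ->
  exists p x, [/\ (F `|` A) p, leD (inf p a) x & I x].
Proof.
move=> Pc nPa; have [[Pup Pinf] PI] := extA.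
apply: contrapT => noesc.
pose B x := exists2 p, (F `|` A) p & leD (inf p a) x.
have PB x : (F `|` A) x -> B x by exists x => //; exact: infl.
have FBB x : (F `|` B) x -> B x by case=> // Fx; apply: PB; left.
apply: (maxA (B := B)); first split.
- by move=> x Ax; apply: PB; right.
- move=> BA; apply: nPa; right; apply: BA.
  by exists c => //; exact: infr.
split; first split.
- move=> x y /FBB[p Pp px] xy; right; exists p => //; exact: leD_trans xy.
- move=> x y /FBB[p Pp px] /FBB[q Pq qy]; right; exists (inf p q); first exact: Pinf.
  apply: le_inf.
  + apply: leD_trans px; apply: le_inf; last exact: infr.
    exact: leD_trans (infl _ _) (infl _ _).
  + apply: leD_trans qy; apply: le_inf; last exact: infr.
    exact: leD_trans (infl _ _) (infr _ _).
- by move=> x /FBB[p Pp px] Ix; apply: noesc; exists p, x.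
Qed.

Lemma maximal_extension_prime : is_prime (F `|` A).
Proof.
move=> a b Pab; have [[_ Pinf] PI] := extA.
apply: contrapT => /not_orP[nPa nPb].
have [p [x [Pp px Ix]]] := maximal_extension_escape Pab nPa.
have [q [y [Pq qy Iy]]] := maximal_extension_escape Pab nPb.
have [Idown Isup] := idealI.
apply: (PI (inf (inf p q) (sup a b))); first exact: Pinf (Pinf _ _ Pp Pq) Pab.
apply: Idown (Isup _ _ Ix Iy) _; apply: leD_trans (inf_sup _ _ _) _.
apply: sup_le.
- apply: leD_trans (supl x y); apply: leD_trans px; apply: le_inf; last exact: infr.
  exact: leD_trans (infl _ _) (infl _ _).
- apply: leD_trans (supr x y); apply: leD_trans qy; apply: le_inf; last exact: infr.
  exact: leD_trans (infl _ _) (infr _ _).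
Qed.

End Maximal.

Theorem prime_filter_theorem : exists P : set D,
  [/\ is_filter P, F `<=` P, (forall a, P a -> ~ I a) & is_prime P].
Proof.
have [A [extA maxA]] := Zorn_bigcup avoiding_extension_bigcup.
exists (F `|` A); split; [by case: extA|by move=> a; left|by case: extA|].
exact: maximal_extension_prime.
Qed.

End PrimeFilter.

Section AlgebraLattice.
Variables (L : pqf_alg) (ax1 : axiom1 L) (n : nat).
Implicit Types x y z : car L n.

Lemma meetA x y z : meet L x (meet L y z) = meet L (meet L x y) z.
Proof. by case: (ax1 x y z) => _ []. Qed.
Lemma joinC x y : join L x y = join L y x.
Proof. by case: (ax1 x y x) => _ [] _ []. Qed.
Lemma meetC x y : meet L x y = meet L y x.
Proof. by case: (ax1 x y x) => _ [] _ [] _ []. Qed.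
Lemma joinKI x y : join L x (meet L x y) = x.
Proof. by case: (ax1 x y x) => _ [] _ [] _ [] _ []. Qed.
Lemma meetKU x y : meet L x (join L x y) = x.
Proof. by case: (ax1 x y x) => _ [] _ [] _ [] _ [] _ []. Qed.
Lemma meetUr x y z : meet L x (join L y z) = join L (meet L x y) (meet L x z).
Proof. by case: (ax1 x y z) => _ [] _ [] _ [] _ [] _ [] _ []. Qed.
Lemma joinx0 x : join L x (Defs.zero L) = x.
Proof. by case: (ax1 x x x) => _ [] _ [] _ [] _ [] _ [] _ [] _ []. Qed.
Lemma meetx1 x : meet L x (Defs.one L) = x.
Proof. by case: (ax1 x x x) => _ [] _ [] _ [] _ [] _ [] _ [] _ []. Qed.

Lemma meetxx x : meet L x x = x.
Proof. by rewrite -{2}(joinKI x x) meetKU. Qed.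

Lemma le_refl x : le x x.
Proof. by rewrite /le meetxx. Qed.
Lemma le_trans x y z : le x y -> le y z -> le x z.
Proof. by rewrite /le => xy yz; rewrite xy -meetA -yz. Qed.
Lemma le_anti x y : le x y -> le y x -> x = y.
Proof. by rewrite /le => xy yx; rewrite xy meetC -yx. Qed.
Lemma leIl x y : le (meet L x y) x.
Proof. by rewrite /le [RHS]meetC meetA meetxx. Qed.
Lemma leIr x y : le (meet L x y) y.
Proof. by rewrite /le -meetA meetxx. Qed.
Lemma lexI x y z : le z x -> le z y -> le z (meet L x y).
Proof. by rewrite /le => zx zy; rewrite meetA -zx. Qed.
Lemma leUl x y : le x (join L x y).
Proof. by rewrite /le meetKU. Qed.
Lemma leUr x y : le y (join L x y).
Proof. by rewrite joinC; exact: leUl. Qed.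
Lemma leUx x y z : le x z -> le y z -> le (join L x y) z.
Proof. by rewrite /le => xz yz; rewrite meetC meetUr meetC -xz meetC -yz. Qed.
Lemma le_meetUr x y z : le (meet L x (join L y z)) (join L (meet L x y) (meet L x z)).
Proof. by rewrite meetUr; exact: le_refl. Qed.
Lemma le0x x : le (Defs.zero L) x.
Proof. by rewrite /le -{1}(joinx0 x) joinC meetKU. Qed.
Lemma lex1 x : le x (Defs.one L).
Proof. by rewrite /le meetx1. Qed.

Lemma bigmeet_le m (F : 'I_m -> car L n) i :
  le (\big[@meet L n/Defs.one L]_(j < m) F j) (F i).
Proof.
elim: m F i => [|m IH] F i; first by case: i.
rewrite big_ord_recl; case: (unliftP ord0 i) => [j ->|->]; last exact: leIl.
exact: le_trans (leIr _ _) (IH _ _).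
Qed.

Lemma le_bigjoin m (F : 'I_m -> car L n) i :
  le (F i) (\big[@join L n/Defs.zero L]_(j < m) F j).
Proof.
elim: m F i => [|m IH] F i; first by case: i.
rewrite big_ord_recl; case: (unliftP ord0 i) => [j ->|->]; last exact: leUl.
exact: le_trans (IH _ _) (leUr _ _).
Qed.

Lemma sort_prime_filter (a b : car L n) : ~ le a b ->
  exists q : car L n -> Prop,
    [/\ is_filter (@le L n) (@meet L n) q, is_prime (@join L n) q, q a & ~ q b].
Proof.
move=> nab.
have filter_up : is_filter (@le L n) (@meet L n) (fun x => le a x).
  by split=> [x y ax xy|x y]; [exact: le_trans xy|exact: lexI].
have ideal_down : is_ideal (@le L n) (@join L n) (fun x => le x b).
  by split=> [x y yb xy|x y]; [exact: le_trans yb|exact: leUx].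
have [q [filterq aq qb primeq]] := prime_filter_theorem le_trans leIl leIr lexI
  leUl leUr leUx le_meetUr filter_up ideal_down
  (fun x ax xb => nab (le_trans ax xb)).
exists q; split => //; first by apply: aq; exact: le_refl.
by move/qb; apply; exact: le_refl.
Qed.

End AlgebraLattice.

Lemma cylE m (ks : 'I_m -> nat) i l : val (cyl ks i l) = l + offset ks i.
Proof. by rewrite ffunE. Qed.

Lemma offset_mono m (ks : 'I_m -> nat) (i i' : 'I_m) :
  i < i' -> offset ks i + ks i <= offset ks i'.
Proof.
move=> ii'.
have -> : offset ks i + ks i = \sum_(j < m | j <= i) ks j.
  rewrite (bigD1 i) //= addnC; congr (_ + _).
  by apply: eq_bigl => j; rewrite ltn_neqAle andbC.
rewrite /offset [X in _ <= X]big_mkcond [X in X <= _]big_mkcond /=.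
apply: leq_sum => j _; case: ifP => // ji.
by rewrite (leq_ltn_trans ji ii').
Qed.

Lemma cyl_inj m (ks : 'I_m -> nat) i i' l l' : cyl ks i l = cyl ks i' l' -> i = i'.
Proof.
have cyl_lt j j' (k : 'I_(ks j)) (k' : 'I_(ks j')) : j < j' -> val (cyl ks j k) < val (cyl ks j' k').
  move=> jj'; rewrite !cylE; apply: leq_trans (leq_addl _ _).
  by apply: leq_trans (offset_mono ks jj'); rewrite addnC ltn_add2l.
move=> E; case: (ltngtP i i') => [lt|lt|/val_inj //].
- by have := cyl_lt _ _ l l' lt; rewrite E ltnn.
- by have := cyl_lt _ _ l' l lt; rewrite E ltnn.
Qed.

Lemma cyl_extend (T : Type) m (ks : 'I_m -> nat) (f : forall i, 'I_(ks i) -> T) :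
  exists g : 'I_(\sum_(i < m) ks i) -> T, forall i l, g (cyl ks i l) = f i l.
Proof.
suff [g gP] : {g : 'I_(\sum_(i < m) ks i) -> T & forall p i l, cyl ks i l = p -> g p = f i l}.
  by exists g => i l; exact: gP.
apply: (@choice _ T (fun p t => forall i l, cyl ks i l = p -> t = f i l)) => p.
have [[i [l ilp]]|noil] := pselect (exists i l, cyl ks i l = p).
  exists (f i l) => i' l' E; have ii := cyl_inj (etrans E (esym ilp)); subst i'.
  congr (f i _); apply: val_inj; apply/(@addIn (offset ks i)).
  by rewrite -!cylE E ilp.
(* No need for surjectivity of the blocks: any value of [T] will do here, and
   one exists because [p] inhabits a nonempty sum. *)
have [i ki] : exists i, 0 < ks i.
  apply: contrapT => /forallNP kz; case: p {noil} => p; rewrite big1 // => i _.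
  by apply/eqP; rewrite -leqn0 leqNgt; apply/negP; exact: kz.
by exists (f i (Ordinal ki)) => i' l' E; exfalso; apply: noil; exists i', l'.
Qed.

Definition embeds (L M : pqf_alg) : Prop :=
  exists f : forall n, car L n -> car M n, is_hom f /\ forall n, injective (f n).

Definition cat_fun (T : Type) k l (x : 'I_k -> T) (y : 'I_l -> T) (i : 'I_(k + l)) : T :=
  match split i with inl a => x a | inr b => y b end.

Lemma cat_fun_lshift (T : Type) k l (x : 'I_k -> T) (y : 'I_l -> T) i :
  cat_fun x y (lshift l i) = x i.
Proof. by rewrite /cat_fun (unsplitK (inl _ i)). Qed.

Lemma cat_fun_rshift (T : Type) k l (x : 'I_k -> T) (y : 'I_l -> T) i :
  cat_fun x y (rshift k i) = y i.
Proof. by rewrite /cat_fun (unsplitK (inr _ i)). Qed.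

Section Completeness.
Variable L : pqf_alg.
Hypotheses (ax0 : axiom0 L) (ax1 : axiom1 L) (ax2 : axiom2 L) (ax3 : axiom3 L).

Definition gap := {n : nat & {rs : car L n * car L n | ~ le rs.1 rs.2}}.
Definition arity (j : gap) : nat := projT1 j.
Definition gap_l (j : gap) : car L (arity j) := (sval (projT2 j)).1.
Definition gap_r (j : gap) : car L (arity j) := (sval (projT2 j)).2.

Lemma gap_nle j : ~ le (gap_l j) (gap_r j).
Proof. exact: svalP (projT2 j). Qed.

Definition gvar := {j : gap & 'I_(arity j)}.
Definition gvars (j : gap) (l : 'I_(arity j)) : gvar := existT _ j l.
Arguments gvars : clear implicits.

Record model := Model {
  holds : forall k, ('I_k -> gvar) -> car L k -> Prop;
  holds_meet k (x : 'I_k -> gvar) r s : holds x (meet L r s) <-> holds x r /\ holds x s;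
  holds_join k (x : 'I_k -> gvar) r s : holds x (join L r s) <-> holds x r \/ holds x s;
  holds_one k (x : 'I_k -> gvar) : holds x (Defs.one L);
  holds_zero k (x : 'I_k -> gvar) : ~ holds x (Defs.zero L);
  holds_sub n k (a : {ffun 'I_n -> 'I_k}) (x : 'I_k -> gvar) r :
    holds x (sub L a r) <-> holds (fun i => x (a i)) r
}.
Arguments holds m {k} x r.

Definition realizes (M : model) (j : gap) : Prop :=
  holds M (gvars j) (gap_l j) /\ ~ holds M (gvars j) (gap_r j).

Lemma filter_model N (q : car L N -> Prop) (g : gvar -> 'I_N) :
  is_filter (@le L N) (@meet L N) q -> is_prime (@join L N) q ->
  q (Defs.one L) -> ~ q (Defs.zero L) ->
  exists M : model, forall k (x : 'I_k -> gvar) r,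
    holds M x r <-> q (sub L [ffun i => g (x i)] r).
Proof.
move=> [qup qmeet] qprime q1 q0.
pose gx k (x : 'I_k -> gvar) : {ffun 'I_k -> 'I_N} := [ffun i => g (x i)].
unshelve eexists (@Model (fun k x r => q (sub L (gx k x) r)) _ _ _ _ _) => //.
- move=> k x r s; case: (ax2 (gx k x) r s) => _ _ _ ->; split; last by case; exact: qmeet.
  by move=> qrs; split; apply: qup qrs _; [exact: leIl|exact: leIr].
- move=> k x r s; case: (ax2 (gx k x) r s) => _ _ -> _; split; first exact: qprime.
  by case=> qr; apply: qup qr _; [exact: leUl|exact: leUr].
- by move=> k x; case: (ax2 (gx k x) (Defs.one L) (Defs.one L)) => _ -> _ _.
- by move=> k x; case: (ax2 (gx k x) (Defs.one L) (Defs.one L)) => -> _ _ _.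
- move=> n k a x r /=; rewrite -ax3.
  by have -> : comp_sub (gx k x) a = gx n (fun i => x (a i)) by apply/ffunP => i; rewrite !ffunE.
Qed.

(* Axiom (0) provides a single prime filter on the sort [\sum_i arity (S i)]
   in which every gap of [S] is realized at its own block of variables. *)
Lemma finite_gaps_model_of_maps m (S : 'I_m -> gap) :
  (forall j, inhabited ('I_(arity j) -> 'I_(\sum_(i < m) arity (S i)))) ->
  exists M, forall i, realizes M (S i).
Proof.
move=> maps; set ks := fun i => arity (S i); set N := \sum_(i < m) ks i.
have nle : ~ le (\big[@meet L N/Defs.one L]_(i < m) sub L (cyl ks i) (gap_l (S i)))
                (\big[@join L N/Defs.zero L]_(i < m) sub L (cyl ks i) (gap_r (S i))).
  by move/ax0 => [i]; exact: gap_nle.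
have [q [filterq primeq qM qJ]] := sort_prime_filter ax1 nle.
have [qup _] := filterq.
have q_cyl i : q (sub L (cyl ks i) (gap_l (S i))) /\ ~ q (sub L (cyl ks i) (gap_r (S i))).
  split; first by apply: qup qM _; exact: bigmeet_le.
  by move=> qs; apply: qJ; apply: qup qs _; exact: le_bigjoin.
have Gex j : exists G : 'I_(arity j) -> 'I_N, forall i, S i = j ->
    q (sub L [ffun l => G l] (gap_l j)) /\ ~ q (sub L [ffun l => G l] (gap_r j)).
  have [[i <-]|noi] := pselect (exists i, S i = j); last first.
    by case: (maps j) => G; exists G => i Sij; exfalso; apply: noi; exists i.
  exists (cyl ks i) => _ _.
  have -> : [ffun l => cyl ks i l] = cyl ks i by apply/ffunP => l; rewrite ffunE.
  exact: q_cyl.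
pose G j := sval (cid (Gex j)).
have q1 : q (Defs.one L) by apply: qup qM _; exact: lex1.
have q0 : ~ q (Defs.zero L) by move=> q0; apply: qJ; apply: qup q0 _; exact: le0x.
have [M HM] := filter_model (fun v => G (tag v) (tagged v)) filterq primeq q1 q0.
by exists M => i; rewrite /realizes !HM; exact: svalP (cid (Gex (S i))) i erefl.
Qed.

(* A gap of positive arity is appended so that every gap has an assignment into
   the then nonempty block of variables. *)
Lemma finite_gaps_model m (S : 'I_m -> gap) : exists M, forall i, realizes M (S i).
Proof.
have [[j0 j0pos]|nopos] := pselect (exists j : gap, 0 < arity j); last first.
  apply: finite_gaps_model_of_maps => j; constructor => l; exfalso.
  by apply: nopos; exists j; exact: leq_ltn_trans (leq0n l) (ltn_ord l).
pose S' := cat_fun S (fun _ : 'I_1 => j0).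
have Npos : 0 < \sum_(i < m + 1) arity (S' i).
  rewrite (bigD1 (rshift m ord0)) //= /S' cat_fun_rshift.
  exact: leq_trans j0pos (leq_addr _ _).
have [M MS'] := @finite_gaps_model_of_maps _ S' (fun j => inhabits (fun _ => Ordinal Npos)).
by exists M => i; have := MS' (lshift 1 i); rewrite /S' cat_fun_lshift.
Qed.

Definition formula := {k : nat & (('I_k -> gvar) * car L k)%type}.
Definition sat (M : model) (phi : formula) : Prop := holds M (projT2 phi).1 (projT2 phi).2.
Definition entails (phi psi : formula) : Prop := forall M, sat M phi -> sat M psi.

Definition lsub k l : {ffun 'I_k -> 'I_(k + l)} := [ffun i => lshift l i].
Definition rsub k l : {ffun 'I_l -> 'I_(k + l)} := [ffun i => rshift k i].

Definition fcombine (op : forall n, car L n -> car L n -> car L n) (phi psi : formula) :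
  formula :=
  existT _ (projT1 phi + projT1 psi)
    (cat_fun (projT2 phi).1 (projT2 psi).1,
     op _ (sub L (lsub _ _) (projT2 phi).2) (sub L (rsub _ _) (projT2 psi).2)).
Definition fmeet := fcombine (@meet L).
Definition fjoin := fcombine (@join L).

Lemma holds_lsub M k l (x : 'I_k -> gvar) (y : 'I_l -> gvar) r :
  holds M (cat_fun x y) (sub L (lsub k l) r) <-> holds M x r.
Proof.
rewrite holds_sub; suff -> : (fun i => cat_fun x y (lsub k l i)) = x by [].
by apply: funext => i; rewrite ffunE cat_fun_lshift.
Qed.

Lemma holds_rsub M k l (x : 'I_k -> gvar) (y : 'I_l -> gvar) r :
  holds M (cat_fun x y) (sub L (rsub k l) r) <-> holds M y r.
Proof.
rewrite holds_sub; suff -> : (fun i => cat_fun x y (rsub k l i)) = y by [].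
by apply: funext => i; rewrite ffunE cat_fun_rshift.
Qed.

Lemma sat_fmeet M phi psi : sat M (fmeet phi psi) <-> sat M phi /\ sat M psi.
Proof. by case: phi psi => [k [x r]] [l [y s]]; rewrite /sat /= holds_meet holds_lsub holds_rsub. Qed.

Lemma sat_fjoin M phi psi : sat M (fjoin phi psi) <-> sat M phi \/ sat M psi.
Proof. by case: phi psi => [k [x r]] [l [y s]]; rewrite /sat /= holds_join holds_lsub holds_rsub. Qed.

Lemma entails_trans a b c : entails a b -> entails b c -> entails a c.
Proof. by move=> ab bc M /ab /bc. Qed.
Lemma fmeet_entails_l a b : entails (fmeet a b) a.
Proof. by move=> M /sat_fmeet[]. Qed.
Lemma fmeet_entails_r a b : entails (fmeet a b) b.
Proof. by move=> M /sat_fmeet[]. Qed.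
Lemma entails_fmeet a b c : entails c a -> entails c b -> entails c (fmeet a b).
Proof. by move=> ca cb M Mc; apply/sat_fmeet; split; [exact: ca|exact: cb]. Qed.
Lemma entails_fjoin_l a b : entails a (fjoin a b).
Proof. by move=> M Ma; apply/sat_fjoin; left. Qed.
Lemma entails_fjoin_r a b : entails b (fjoin a b).
Proof. by move=> M Mb; apply/sat_fjoin; right. Qed.
Lemma fjoin_entails a b c : entails a c -> entails b c -> entails (fjoin a b) c.
Proof. by move=> ac bc M /sat_fjoin[/ac|/bc]. Qed.
Lemma fmeet_fjoin_entails a b c :
  entails (fmeet a (fjoin b c)) (fjoin (fmeet a b) (fmeet a c)).
Proof.
move=> M /sat_fmeet[Ma /sat_fjoin[Mb|Mc]]; apply/sat_fjoin; [left|right]; exact/sat_fmeet.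
Qed.

Definition forced (phi : formula) : Prop := exists m (S : 'I_m -> gap),
  forall M, (forall i, holds M (gvars (S i)) (gap_l (S i))) -> sat M phi.
Definition refuted (phi : formula) : Prop := exists m (S : 'I_m -> gap),
  forall M, sat M phi -> exists i, holds M (gvars (S i)) (gap_r (S i)).

Lemma forced_filter : is_filter entails fmeet forced.
Proof.
split=> [a b [m [S Sa]] ab|a b [m1 [S1 S1a]] [m2 [S2 S2b]]].
  by exists m, S => M MS; apply: ab; exact: Sa.
exists (m1 + m2), (cat_fun S1 S2) => M MS; apply/sat_fmeet; split.
- by apply: S1a => i; have := MS (lshift m2 i); rewrite cat_fun_lshift.
- by apply: S2b => i; have := MS (rshift m1 i); rewrite cat_fun_rshift.
Qed.

Lemma refuted_ideal : is_ideal entails fjoin refuted.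
Proof.
split=> [a b [m [S Sb]] ab|a b [m1 [S1 S1a]] [m2 [S2 S2b]]].
  by exists m, S => M /ab; exact: Sb.
exists (m1 + m2), (cat_fun S1 S2) => M /sat_fjoin[/S1a[i Mi]|/S2b[i Mi]].
- by exists (lshift m2 i); rewrite cat_fun_lshift.
- by exists (rshift m1 i); rewrite cat_fun_rshift.
Qed.

Lemma forced_refuted phi : forced phi -> ~ refuted phi.
Proof.
move=> [m1 [S1 S1phi]] [m2 [S2 S2phi]].
have [M MS] := finite_gaps_model (cat_fun S1 S2).
have [i Mi] : exists i, holds M (gvars (S2 i)) (gap_r (S2 i)).
  by apply: S2phi; apply: S1phi => i; have := MS (lshift m2 i); rewrite cat_fun_lshift => -[].
by have := MS (rshift m1 i); rewrite cat_fun_rshift => -[].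
Qed.

(* Compactness: a prime filter of formulas, separating [forced] from
   [refuted], is itself a model realizing every gap. *)
Lemma gaps_model : exists M, forall j, realizes M j.
Proof.
have [P [[Pup Pmeet] forcedP Prefuted Pprime]] := prime_filter_theorem entails_trans
  fmeet_entails_l fmeet_entails_r entails_fmeet entails_fjoin_l entails_fjoin_r
  fjoin_entails fmeet_fjoin_entails forced_filter refuted_ideal forced_refuted.
pose holdsP k (x : 'I_k -> gvar) r := P (existT _ k (x, r)).
have S0 : 'I_0 -> gap by case.
unshelve eexists (@Model holdsP _ _ _ _ _).
- move=> k x r s; split.
  + by move=> Prs; split; apply: Pup Prs _ => M /holds_meet[].
  + by move=> [Pr Ps]; apply: Pup (Pmeet _ _ Pr Ps) _ => M /sat_fmeet[? ?]; exact/holds_meet.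
- move=> k x r s; split; last by case=> Pr; apply: Pup Pr _ => M ?; apply/holds_join; [left|right].
  by move=> Prs; apply: Pprime; apply: Pup Prs _ => M /holds_join ?; exact/sat_fjoin.
- by move=> k x; apply: forcedP; exists 0, S0 => M _; exact: holds_one.
- by move=> k x /Prefuted; apply; exists 0, S0 => M /holds_zero.
- by move=> n k a x r; split=> Pr; apply: Pup Pr _ => M /holds_sub.
move=> j; split=> /=.
- by apply: forcedP; exists 1, (fun=> j) => M /(_ ord0).
- by move/Prefuted; apply; exists 1, (fun=> j) => M Mj; exists ord0.
Qed.

Lemma completeness : embeds L (A gvar).
Proof.
have [M Mgaps] := gaps_model.
exists (fun n r x => holds M x r); split.
  split=> [n k a r|n|n|n r s|n r s]; apply: funext => x; apply: propext => /=.
  - exact: holds_sub.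
  - by split=> //; exact: holds_zero.
  - by split=> // _; exact: holds_one.
  - exact: holds_join.
  - exact: holds_meet.
have holds_le n (r s : car L n) : (fun x => holds M x r) = (fun x => holds M x s) -> le r s.
  move=> E; apply: contrapT => nrs; pose j : gap := existT _ n (exist _ (r, s) nrs).
  by have [] := Mgaps j; rewrite -/(gap_l j) (congr1 (@^~ (gvars j)) E).
by move=> n r s E; apply: (le_anti ax1); apply: holds_le; rewrite E.
Qed.

End Completeness.

Section Soundness.
Variables (L : pqf_alg) (W : Type) (e : forall n, car L n -> car (A W) n).
Hypotheses (he : is_hom (@e)) (einj : forall n, injective (@e n)).

Lemma emb_sub n k (a : {ffun 'I_n -> 'I_k}) x : e (sub L a x) = fun w => e x (fun i => w (a i)).
Proof. by case: he => -> _ _ _ _. Qed.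
Lemma emb_zero n : e (@Defs.zero L n) = fun _ => False.
Proof. by case: he => _ -> _ _ _. Qed.
Lemma emb_one n : e (@Defs.one L n) = fun _ => True.
Proof. by case: he => _ _ -> _ _. Qed.
Lemma emb_join n (x y : car L n) : e (join L x y) = fun w => e x w \/ e y w.
Proof. by case: he => _ _ _ -> _. Qed.
Lemma emb_meet n (x y : car L n) : e (meet L x y) = fun w => e x w /\ e y w.
Proof. by case: he => _ _ _ _ ->. Qed.

Lemma le_emb n (x y : car L n) : le x y <-> forall w, e x w -> e y w.
Proof.
split=> [-> w|xy]; first by rewrite emb_meet => -[].
apply: einj; rewrite emb_meet; apply: funext => w; apply: propext.
by split=> [xw|[]//]; split=> //; exact: xy.
Qed.

Lemma emb_bigmeet n m (F : 'I_m -> car L n) w :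
  e (\big[@meet L n/Defs.one L]_(i < m) F i) w <-> forall i, e (F i) w.
Proof.
elim: m F => [|m IH] F; first by rewrite big_ord0 emb_one; split=> // _ [].
rewrite big_ord_recl emb_meet IH; split=> [[F0 FS] i|Fw]; last by split=> *; exact: Fw.
by case: (unliftP ord0 i) => [j ->|->].
Qed.

Lemma emb_bigjoin n m (F : 'I_m -> car L n) w :
  e (\big[@join L n/Defs.zero L]_(i < m) F i) w <-> exists i, e (F i) w.
Proof.
elim: m F => [|m IH] F; first by rewrite big_ord0 emb_zero; split=> // -[] [].
rewrite big_ord_recl emb_join IH; split=> [[F0|[j Fj]]|[i]]; [by exists ord0|by exists (lift ord0 j)|].
by case: (unliftP ord0 i) => [j ->|->] Fi; [right; exists j|left].
Qed.

Local Ltac emb_eq := apply: einj;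
  rewrite ?(emb_meet, emb_join, emb_zero, emb_one, emb_sub);
  apply: funext => w; apply: propext; tauto.

Lemma emb_axiom0 : axiom0 L.
Proof.
move=> m ks r s /le_emb rs; apply: contrapT => /forallNP nrs.
have wit i : exists w, e (r i) w /\ ~ e (s i) w.
  apply: contrapT => /forallNP nw; apply: (nrs i); apply/le_emb => w rw.
  by apply: contrapT => nsw; apply: (nw w).
pose wi i := sval (cid (wit i)).
have [w wE] := cyl_extend wi.
have wcyl i : (fun l => w (cyl ks i l)) = wi i by apply: funext => l; exact: wE.
have [i] : exists i, e (sub L (cyl ks i) (s i)) w.
  apply/emb_bigjoin; apply: rs; apply/emb_bigmeet => i.
  by rewrite emb_sub wcyl; case: (svalP (cid (wit i))).
by rewrite emb_sub wcyl; case: (svalP (cid (wit i))).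
Qed.

Lemma embedding_axioms : pqf_axioms L.
Proof.
split; [exact: emb_axiom0| | | |].
- by move=> n x y z; repeat split; emb_eq.
- by move=> n k a x y; split; emb_eq.
- move=> k n m a b r; apply: einj; rewrite !emb_sub; apply: funext => w.
  by congr (e r _); apply: funext => i; rewrite ffunE.
- move=> n r; apply: einj; rewrite !emb_sub; apply: funext => w.
  by congr (e r _); apply: funext => i; rewrite ffunE.
Qed.

End Soundness.

Lemma sval_inj (T : Type) (P : T -> Prop) : injective (@proj1_sig T P).
Proof. by case=> x px [y py] /= xy; exact: eq_exist. Qed.

Lemma embeds_subalg (L M : pqf_alg) (S : subalg M) :
  isomorphic L (subalg_alg S) -> embeds L M.
Proof.
case=> f [[fsub f0 f1 fU fI] fbij].
exists (fun n r => sval (f n r)); split; last by move=> n r s /sval_inj/(bij_inj (fbij n)).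
by split=> [n k a x|n|n|n x y|n x y]; rewrite ?fsub ?f0 ?f1 ?fU ?fI.
Qed.

Lemma subalg_of_embeds (L M : pqf_alg) :
  embeds L M -> exists S : subalg M, isomorphic L (subalg_alg S).
Proof.
case=> f [[fsub f0 f1 fU fI] finj].
pose image n (X : car M n) := exists r, f n r = X.
have image_sub n k (a : {ffun 'I_n -> 'I_k}) X : image n X -> image k (sub M a X).
  by case=> r <-; exists (sub L a r).
have image_join n (X Y : car M n) : image n X -> image n Y -> image n (join M X Y).
  by case=> r <- [s <-]; exists (join L r s).
have image_meet n (X Y : car M n) : image n X -> image n Y -> image n (meet M X Y).
  by case=> r <- [s <-]; exists (meet L r s).
pose S := @Subalg M image image_sub (fun n => ex_intro _ _ (f0 n))
  (fun n => ex_intro _ _ (f1 n)) image_join image_meet.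
exists S; exists (fun n r => exist _ (f n r) (ex_intro _ r erefl) : car (subalg_alg S) n).
split; first by split=> *; apply: sval_inj; rewrite /= ?fsub ?f0 ?f1 ?fU ?fI.
move=> n; exists (fun X : car (subalg_alg S) n => sval (cid (svalP X))).
- by move=> r; apply: finj; case: cid.
- by case=> X imX; apply: sval_inj; case: cid.
Qed.

Theorem theorem3p2 (L : pqf_alg) :
  pqf_axioms L <->
  exists (W : Type) (S : subalg (A W)), isomorphic L (subalg_alg S).
Proof.
split.
- by case=> ax0 ax1 ax2 ax3 _; exists (gvar L); apply: subalg_of_embeds; exact: completeness.
- by case=> W [S /embeds_subalg[e [he einj]]]; exact: embedding_axioms he einj.
Qed.
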